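(* Let $G=\mathbb{R}^2\setminus\{-e_1,e_1\}$, where $e_1=(1,0)$. Let $\beta>0$ be the unique positive solution of $\operatorname{arsinh}t+\arctan t=\pi$ ($\beta\approx3.1841$). Then \[ A_G\ge\frac{2\operatorname{arsinh}\beta}{\log\left(1+\frac{2\beta}{\sqrt{1+\beta^2}}\right)}\approx3.5131 . \]
   Context: For a domain $G\subsetneq\mathbb{R}^n$ let $d_G(x)=d(x,\partial G)$; $k_G(x,y)=\inf_\gamma\int_\gamma\frac{|dx|}{d_G(x)}$ over rectifiable curves $\gamma\subset G$ joining $x,y$ (quasihyperbolic distance); $j_G(x,y)=\log\left(1+\frac{|x-y|}{\min\{d_G(x),d_G(y)\}}\right)$; the uniformity constant is $A_G=\inf\{A\ge1: k_G\le A\,j_G\text{ on }G\times G\}$ (with $\inf\emptyset=+\infty$). *)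

From Stdlib Require Import Reals.
Open Scope R_scope.

Definition pt := (R * R)%type.

Definition dist2 (p q : pt) : R :=
  sqrt ((fst p - fst q) ^ 2 + (snd p - snd q) ^ 2).

Definition e1 : pt := (1, 0).
Definition me1 : pt := (-1, 0).

Definition inG (p : pt) : Prop := p <> e1 /\ p <> me1.

(* d_G(x) = d(x, boundary G) = distance to {-e1, e1} *)
Definition dG (p : pt) : R := Rmin (dist2 p e1) (dist2 p me1).

Definition jG (x y : pt) : R := ln (1 + dist2 x y / Rmin (dG x) (dG y)).

Definition partition (P : nat -> R) (n : nat) (a b : R) : Prop :=
  P 0%nat = a /\ P n = b /\ (forall i, (i < n)%nat -> P i < P (S i)).

Definition curve_cont (g : R -> pt) (a b : R) : Prop :=
  forall t, a <= t <= b -> forall eps, 0 < eps -> exists delta, 0 < delta /\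
    forall s, a <= s <= b -> Rabs (s - t) < delta -> dist2 (g s) (g t) < eps.

Fixpoint poly_len (g : R -> pt) (P : nat -> R) (n : nat) : R :=
  match n with
  | O => 0
  | S m => poly_len g P m + dist2 (g (P (S m))) (g (P m))
  end.

Definition rectifiable (g : R -> pt) (a b : R) : Prop :=
  exists M, forall P n, partition P n a b -> poly_len g P n <= M.

(* Lower sums  sum_i c_i |g(t_{i+1}) - g(t_i)|  with c_i a lower bound of
   w o g on [t_i, t_{i+1}] *)
Fixpoint wsum (c : nat -> R) (g : R -> pt) (P : nat -> R) (n : nat) : R :=
  match n with
  | O => 0
  | S m => wsum c g P m + c m * dist2 (g (P (S m))) (g (P m))
  end.

(* Line integral  int_g w ds <= M  on [0,1], for w continuous and
   g rectifiable: the integral is the supremum of such lower sums. *)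
Definition line_int_le (w : pt -> R) (g : R -> pt) (M : R) : Prop :=
  forall P n c, partition P n 0 1 ->
    (forall i, (i < n)%nat -> forall s, P i <= s <= P (S i) -> c i <= w (g s)) ->
    wsum c g P n <= M.

Definition admissible_curve (g : R -> pt) (x y : pt) : Prop :=
  curve_cont g 0 1 /\ rectifiable g 0 1 /\ g 0 = x /\ g 1 = y /\
  (forall t, 0 <= t <= 1 -> inG (g t)).

(* k_G(x,y) <= r, where k_G is the infimum over admissible curves of
   int_g |dx| / d_G(x) *)
Definition kG_le (x y : pt) (r : R) : Prop :=
  forall eps, 0 < eps -> exists g, admissible_curve g x y /\
    line_int_le (fun p => / dG p) g (r + eps).

Definition unif_const_ok (A : R) : Prop :=
  1 <= A /\ forall x y, inG x -> inG y -> kG_le x y (A * jG x y).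

From Stdlib Require Import Reals Lra Psatz.
From Coquelicot Require Import Coquelicot.
Open Scope R_scope.

(* Let theta and theta' be the angles at e1 and -e1 from the ray of the real axis pointing
   away from the origin to a point (x, y), y > 0, and let psi = min(theta, theta', arsinh y)
   there, extended to y < 0 as an odd function of y.  The angles have gradient of length
   1 / |z - e1| resp. 1 / |z + e1|, both at most 1 / d_G(z); arsinh y has gradient
   1 / sqrt(1 + y^2) <= 1 / d_G(z) in the strip |x| <= 2, and outside the strip it is never
   the minimum; near the real axis psi is at most the distance to the axis over d_G.  So psi
   is 1-Lipschitz for the quasihyperbolic metric and k_G(x, y) >= |psi(x) - psi(y)|.  By the
   choice of beta both angles at (0, beta) equal pi - atan beta = arsinh beta, hence
   k_G((0, beta), (0, -beta)) >= 2 arsinh beta, while j_G of these points is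
   log(1 + 2 beta / sqrt(1 + beta^2)). *)

Lemma Rinv_le_1 x : 1 <= x -> / x <= 1.
Proof. intros Hx. rewrite <- Rinv_1. apply Rinv_le_contravar; lra. Qed.

Lemma Rdiv_le_contravar_r x u k : 0 <= x -> 0 < k -> k <= u -> x / u <= x / k.
Proof.
  intros Hx Hk Hku. unfold Rdiv. apply Rmult_le_compat_l; [exact Hx|].
  apply Rinv_le_contravar; assumption.
Qed.

Lemma Rabs_Rmin_sub_le x1 x2 y1 y2 B :
  Rabs (x1 - y1) <= B -> Rabs (x2 - y2) <= B -> Rabs (Rmin x1 x2 - Rmin y1 y2) <= B.
Proof.
  rewrite !Rabs_le_between. intros H1 H2.
  unfold Rmin; destruct (Rle_dec x1 x2); destruct (Rle_dec y1 y2); lra.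
Qed.

Lemma sqrt_sum_sq_mul_self u v : sqrt (u^2 + v^2) * sqrt (u^2 + v^2) = u^2 + v^2.
Proof. apply sqrt_sqrt; nra. Qed.

Lemma dot_le_norm2 u1 u2 v1 v2 :
  u1 * v1 + u2 * v2 <= sqrt (u1^2 + u2^2) * sqrt (v1^2 + v2^2).
Proof.
  apply Rsqr_incr_0_var; [|apply Rmult_le_pos; apply sqrt_pos].
  unfold Rsqr.
  replace (sqrt (u1^2 + u2^2) * sqrt (v1^2 + v2^2) * (sqrt (u1^2 + u2^2) * sqrt (v1^2 + v2^2)))
    with ((sqrt (u1^2 + u2^2) * sqrt (u1^2 + u2^2)) * (sqrt (v1^2 + v2^2) * sqrt (v1^2 + v2^2)))
    by ring.
  rewrite !sqrt_sum_sq_mul_self.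
  assert (0 <= (u1 * v2 - u2 * v1)^2) by apply pow2_ge_0.
  nra.
Qed.

Lemma Rabs_cross_le_norm2 u1 u2 v1 v2 :
  Rabs (u1 * v2 - u2 * v1) <= sqrt (u1^2 + u2^2) * sqrt (v1^2 + v2^2).
Proof.
  assert (H1 := dot_le_norm2 u1 u2 (- v2) v1).
  assert (H2 := dot_le_norm2 u1 u2 v2 (- v1)).
  replace ((- v2)^2 + v1^2) with (v1^2 + v2^2) in H1 by ring.
  replace (v2^2 + (- v1)^2) with (v1^2 + v2^2) in H2 by ring.
  apply Rabs_le; lra.
Qed.

Lemma Rabs_cross_div_le u1 u2 v1 v2 h :
  0 < h -> h <= sqrt (v1^2 + v2^2) ->
  Rabs ((v1 * u2 - v2 * u1) / (v1^2 + v2^2)) <= sqrt (u1^2 + u2^2) / h.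
Proof.
  intros Hh Hv.
  assert (Hcross := Rabs_cross_le_norm2 u1 u2 v1 v2).
  assert (Env := sqrt_sum_sq_mul_self v1 v2).
  set (nu := sqrt (u1^2 + u2^2)) in *. set (nv := sqrt (v1^2 + v2^2)) in *.
  assert (0 <= nu) by apply sqrt_pos.
  replace (v1 * u2 - v2 * u1) with (- (u1 * v2 - u2 * v1)) by ring.
  rewrite <- Env. unfold Rdiv.
  rewrite Rabs_mult, Rabs_Ropp, Rabs_inv, (Rabs_right (nv * nv)) by nra.
  apply Rle_trans with (nu * nv * / (nv * nv)).
  - apply Rmult_le_compat_r; [|exact Hcross]. apply Rlt_le, Rinv_0_lt_compat. nra.
  - replace (nu * nv * / (nv * nv)) with (nu / nv) by (field; lra).
    apply Rdiv_le_contravar_r; assumption.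
Qed.

Lemma norm2_triangle u1 u2 v1 v2 :
  sqrt ((u1 + v1)^2 + (u2 + v2)^2) <= sqrt (u1^2 + u2^2) + sqrt (v1^2 + v2^2).
Proof.
  apply Rsqr_incr_0_var; [|apply Rplus_le_le_0_compat; apply sqrt_pos].
  unfold Rsqr. rewrite sqrt_sum_sq_mul_self.
  assert (H := dot_le_norm2 u1 u2 v1 v2).
  assert (H1 := sqrt_sum_sq_mul_self u1 u2).
  assert (H2 := sqrt_sum_sq_mul_self v1 v2).
  nra.
Qed.

Lemma Rabs_le_norm2_l u v : Rabs u <= sqrt (u^2 + v^2).
Proof.
  rewrite <- sqrt_Rsqr_abs. apply sqrt_le_1_alt. unfold Rsqr. nra.
Qed.

Lemma Rabs_le_norm2_r u v : Rabs v <= sqrt (u^2 + v^2).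
Proof. rewrite Rplus_comm. apply Rabs_le_norm2_l. Qed.

Lemma sqrt_sq_add1_lipschitz u v : sqrt (v^2 + 1) <= sqrt (u^2 + 1) + Rabs (v - u).
Proof.
  assert (H := norm2_triangle u 1 (v - u) 0).
  replace ((u + (v - u))^2 + (1 + 0)^2) with (v^2 + 1) in H by ring.
  replace (u^2 + 1^2) with (u^2 + 1) in H by ring.
  replace ((v - u)^2 + 0^2) with (Rsqr (v - u)) in H by (unfold Rsqr; ring).
  rewrite sqrt_Rsqr_abs in H. exact H.
Qed.

Lemma one_le_sqrt_sq_add1 y : 1 <= sqrt (y ^ 2 + 1).
Proof. rewrite <- sqrt_1 at 1. apply sqrt_le_1_alt. nra. Qed.

Lemma dist2_ge0 p q : 0 <= dist2 p q.
Proof. apply sqrt_pos. Qed.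

Lemma dist2_sym p q : dist2 p q = dist2 q p.
Proof. unfold dist2. f_equal. ring. Qed.

Lemma dist2_eq_norm2 p q : dist2 p q = sqrt ((fst q - fst p)^2 + (snd q - snd p)^2).
Proof. unfold dist2. f_equal. ring. Qed.

Lemma dist2_triangle p q r : dist2 p r <= dist2 p q + dist2 q r.
Proof.
  unfold dist2.
  replace (fst p - fst r) with ((fst p - fst q) + (fst q - fst r)) by ring.
  replace (snd p - snd r) with ((snd p - snd q) + (snd q - snd r)) by ring.
  apply norm2_triangle.
Qed.

Lemma dist2_pos p q : p <> q -> 0 < dist2 p q.
Proof.
  intros Hpq. apply sqrt_lt_R0.
  destruct p as [a b], q as [c d]; simpl.
  destruct (Rlt_or_le 0 ((a - c)^2 + (b - d)^2)) as [|Hle]; [assumption|].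
  assert (0 <= (a - c)^2) by apply pow2_ge_0.
  assert (0 <= (b - d)^2) by apply pow2_ge_0.
  exfalso. apply Hpq. f_equal; apply Rle_antisym; nra.
Qed.

Lemma Rabs_fst_le_dist2 p q : Rabs (fst p - fst q) <= dist2 p q.
Proof. apply Rabs_le_norm2_l. Qed.

Lemma Rabs_snd_le_dist2 p q : Rabs (snd p - snd q) <= dist2 p q.
Proof. apply Rabs_le_norm2_r. Qed.

Lemma dist2_le_Rabs_sum p q : dist2 p q <= Rabs (fst p - fst q) + Rabs (snd p - snd q).
Proof.
  apply Rsqr_incr_0_var; [|apply Rplus_le_le_0_compat; apply Rabs_pos].
  unfold Rsqr, dist2. rewrite sqrt_sum_sq_mul_self.
  rewrite <- (pow2_abs (fst p - fst q)), <- (pow2_abs (snd p - snd q)).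
  assert (0 <= Rabs (fst p - fst q)) by apply Rabs_pos.
  assert (0 <= Rabs (snd p - snd q)) by apply Rabs_pos.
  nra.
Qed.

Lemma dG_le_dist2_e1 p : dG p <= dist2 p e1.
Proof. apply Rmin_l. Qed.

Lemma dG_le_dist2_me1 p : dG p <= dist2 p me1.
Proof. apply Rmin_r. Qed.

Lemma dG_lipschitz p q : dG p <= dG q + dist2 p q.
Proof.
  assert (H1 := dist2_triangle p q e1). assert (H2 := dist2_triangle p q me1).
  unfold dG, Rmin.
  destruct (Rle_dec (dist2 p e1) (dist2 p me1));
  destruct (Rle_dec (dist2 q e1) (dist2 q me1)); lra.
Qed.

Lemma Rabs_dG_sub_le p q : Rabs (dG p - dG q) <= dist2 p q.
Proof.
  assert (H1 := dG_lipschitz p q). assert (H2 := dG_lipschitz q p).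
  rewrite dist2_sym in H2. apply Rabs_le. lra.
Qed.

Lemma dG_pos p : inG p -> 0 < dG p.
Proof. intros [H1 H2]. apply Rmin_pos; apply dist2_pos; assumption. Qed.

Definition seg (p q : pt) (t : R) : pt :=
  (fst p + t * (fst q - fst p), snd p + t * (snd q - snd p)).

Lemma seg_0 p q : seg p q 0 = p.
Proof. destruct p; unfold seg; cbn [fst snd]; f_equal; ring. Qed.

Lemma seg_1 p q : seg p q 1 = q.
Proof. destruct q; unfold seg; cbn [fst snd]; f_equal; ring. Qed.

Lemma dist2_seg_l p q t : 0 <= t -> dist2 p (seg p q t) = t * dist2 p q.
Proof.
  intros Ht. unfold dist2, seg; cbn [fst snd].
  replace ((fst p - (fst p + t * (fst q - fst p)))^2 + (snd p - (snd p + t * (snd q - snd p)))^2)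
    with (t^2 * ((fst p - fst q)^2 + (snd p - snd q)^2)) by ring.
  rewrite sqrt_mult_alt, sqrt_pow2 by (apply pow2_ge_0 || lra). reflexivity.
Qed.

Lemma dist2_seg_r p q t : t <= 1 -> dist2 (seg p q t) q = (1 - t) * dist2 p q.
Proof.
  intros Ht. unfold dist2, seg; cbn [fst snd].
  replace ((fst p + t * (fst q - fst p) - fst q)^2 + (snd p + t * (snd q - snd p) - snd q)^2)
    with ((1 - t)^2 * ((fst p - fst q)^2 + (snd p - snd q)^2)) by ring.
  rewrite sqrt_mult_alt, sqrt_pow2 by (apply pow2_ge_0 || lra). reflexivity.
Qed.

Lemma dG_seg_lower p q t : 0 <= t <= 1 -> dG p - dist2 p q <= dG (seg p q t).
Proof.
  intros Ht. assert (L := dG_lipschitz p (seg p q t)).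
  rewrite dist2_seg_l in L by lra.
  assert (0 <= dist2 p q) by apply dist2_ge0. nra.
Qed.

Definition mirror (p : pt) : pt := (- fst p, snd p).

Lemma seg_mirror p q t : seg (mirror p) (mirror q) t = mirror (seg p q t).
Proof. unfold seg, mirror; cbn [fst snd]. f_equal; ring. Qed.

Lemma dist2_mirror p q : dist2 (mirror p) (mirror q) = dist2 p q.
Proof. unfold dist2, mirror; cbn [fst snd]. f_equal. ring. Qed.

Lemma dist2_mirror_e1 p : dist2 (mirror p) e1 = dist2 p me1.
Proof. unfold dist2, mirror, e1, me1; cbn [fst snd]. f_equal. ring. Qed.

Definition flip (p : pt) : pt := (fst p, - snd p).

Lemma dist2_flip p q : dist2 (flip p) (flip q) = dist2 p q.
Proof. unfold dist2, flip; cbn [fst snd]. f_equal. ring. Qed.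

Lemma dist2_flip_axis p ar : dist2 (flip p) (ar, 0) = dist2 p (ar, 0).
Proof. unfold dist2, flip; cbn [fst snd]. f_equal. ring. Qed.

Lemma dG_flip p : dG (flip p) = dG p.
Proof.
  unfold dG, dist2, flip, e1, me1; cbn [fst snd].
  replace ((- snd p - 0) ^ 2) with ((snd p - 0) ^ 2) by ring. reflexivity.
Qed.

(** * Elementary inequalities for atan and arsinh *)

Lemma is_derive_arcsinh x : is_derive arcsinh x (/ sqrt (x ^ 2 + 1)).
Proof. apply is_derive_Reals, derivable_pt_lim_arcsinh. Qed.

Lemma Rabs_sub_le_of_derive_bound f df B :
  (forall t, 0 <= t <= 1 -> is_derive f t (df t)) ->
  (forall t, 0 <= t <= 1 -> Rabs (df t) <= B) ->
  Rabs (f 1 - f 0) <= B.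
Proof.
  intros Hd Hb.
  destruct (MVT_cor2 f df 0 1) as [c [E Hc]]; [lra| |].
  - intros c Hc. apply is_derive_Reals, Hd, Hc.
  - rewrite E, Rminus_0_r, Rmult_1_r. apply Hb; lra.
Qed.

Lemma le_of_derive_nonneg f df y :
  (forall t, 0 <= t -> is_derive f t (df t)) ->
  (forall t, 0 <= t -> 0 <= df t) ->
  0 <= y -> f 0 <= f y.
Proof.
  intros Hd Hpos [Hy | <-]; [|lra].
  destruct (MVT_cor2 f df 0 y) as [c [E Hc]]; [lra| |].
  - intros c Hc. apply is_derive_Reals, Hd; lra.
  - assert (0 <= df c) by (apply Hpos; lra). nra.
Qed.

Lemma atan_le_id u : 0 <= u -> atan u <= u.
Proof.
  intros Hu.
  assert (H := le_of_derive_nonneg (fun t => t - atan t) (fun t => 1 - / (1 + t²)) u).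
  cbv beta in H. rewrite atan_0, Rminus_0_r in H.
  enough (0 <= u - atan u) by lra.
  apply H; [| |exact Hu].
  - intros t _. auto_derive; [auto|]. unfold Rsqr. field. nra.
  - intros t _. unfold Rsqr.
    assert (/ (1 + t * t) <= 1) by (apply Rinv_le_1; nra).
    lra.
Qed.

Lemma arcsinh_le_id y : 0 <= y -> arcsinh y <= y.
Proof.
  intros Hy.
  assert (H := le_of_derive_nonneg (fun t => t - arcsinh t) (fun t => 1 - / sqrt (t ^ 2 + 1)) y).
  cbv beta in H. rewrite arcsinh_0, Rminus_0_r in H.
  enough (0 <= y - arcsinh y) by lra.
  apply H; [| |exact Hy].
  - intros t _. apply (@is_derive_minus R_AbsRing); [auto_derive; [auto|ring]|].
    apply is_derive_arcsinh.
  - intros t _. assert (H1 := one_le_sqrt_sq_add1 t).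
    assert (/ sqrt (t ^ 2 + 1) <= 1) by (apply Rinv_le_1; lra).
    lra.
Qed.

Lemma atan_le_arcsinh y : 0 <= y -> atan y <= arcsinh y.
Proof.
  intros Hy.
  assert (H := le_of_derive_nonneg (fun t => arcsinh t - atan t)
                 (fun t => / sqrt (t ^ 2 + 1) - / (1 + t²)) y).
  cbv beta in H. rewrite atan_0, arcsinh_0, Rminus_0_r in H.
  enough (0 <= arcsinh y - atan y) by lra.
  apply H; [| |exact Hy].
  - intros t _. apply (@is_derive_minus R_AbsRing); [apply is_derive_arcsinh|apply is_derive_atan].
  - intros t _. assert (H1 := one_le_sqrt_sq_add1 t).
    assert (sqrt (t ^ 2 + 1) <= 1 + t²).
    { unfold Rsqr. assert (E := sqrt_sqrt (t ^ 2 + 1) ltac:(nra)). nra. }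
    assert (/ (1 + t²) <= / sqrt (t ^ 2 + 1)) by (apply Rinv_le_contravar; lra).
    lra.
Qed.

(** * A lower bound for the quasihyperbolic distance *)

(* A local form of [|f p - f q| <= k_G(p, q)]: the bound tends to [|p - q| / d_G(p)]
   as [q] tends to [p]. *)
Definition qh_lipschitz (f : pt -> R) : Prop :=
  forall p q, 2 * dist2 p q < dG p ->
    Rabs (f p - f q) <= dist2 p q / (dG p - 2 * dist2 p q).

Definition clamp01 (t : R) : R := Rmax 0 (Rmin 1 t).

Lemma clamp01_in t : 0 <= clamp01 t <= 1.
Proof. unfold clamp01, Rmax, Rmin. repeat destruct Rle_dec; lra. Qed.

Lemma clamp01_id t : 0 <= t <= 1 -> clamp01 t = t.
Proof. intros Ht. unfold clamp01, Rmax, Rmin. repeat destruct Rle_dec; lra. Qed.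

Lemma clamp01_lipschitz s t : Rabs (clamp01 s - clamp01 t) <= Rabs (s - t).
Proof.
  assert (H1 := Rle_abs (s - t)). assert (H2 := Rle_abs (t - s)).
  rewrite Rabs_minus_sym in H2. apply Rabs_le.
  unfold clamp01, Rmax, Rmin. repeat destruct Rle_dec; lra.
Qed.

(* Clamping extends a curve on [0, 1] to a curve on R, continuous in the sense of
   [continuity_pt], as needed by [Heine] and [continuity_ab_min]. *)
Lemma continuity_pt_lipschitz_curve F g t :
  (forall p q, Rabs (F p - F q) <= dist2 p q) -> curve_cont g 0 1 ->
  continuity_pt (fun s => F (g (clamp01 s))) t.
Proof.
  intros HF Hg eps Heps.
  destruct (Hg (clamp01 t) (clamp01_in t) eps Heps) as [delta [Hd Hs]].
  exists delta. split; [exact Hd|]. intros s [_ Hst]. cbn in Hst |- *. unfold R_dist in *.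
  eapply Rle_lt_trans; [apply HF|]. apply Hs; [apply clamp01_in|].
  eapply Rle_lt_trans; [apply clamp01_lipschitz|exact Hst].
Qed.

Lemma curve_unif_cont g : curve_cont g 0 1 -> forall eps, 0 < eps ->
  exists delta, 0 < delta /\ forall s t, 0 <= s <= 1 -> 0 <= t <= 1 ->
    Rabs (s - t) < delta -> dist2 (g s) (g t) < eps.
Proof.
  intros Hg eps He.
  assert (Hcoord : forall F, (forall p q, Rabs (F p - F q) <= dist2 p q) ->
    exists delta : posreal, forall s t, 0 <= s <= 1 -> 0 <= t <= 1 ->
      Rabs (s - t) < delta -> Rabs (F (g s) - F (g t)) < eps / 2).
  { intros F HF.
    destruct (Heine (fun s => F (g (clamp01 s))) (fun c => 0 <= c <= 1) (compact_P3 0 1)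
      (fun s _ => continuity_pt_lipschitz_curve F g s HF Hg) (mkposreal (eps / 2) ltac:(lra)))
      as [delta Hdelta].
    exists delta. intros s t Hs Ht Hst. specialize (Hdelta s t Hs Ht Hst).
    cbv beta in Hdelta. rewrite !clamp01_id in Hdelta by assumption. exact Hdelta. }
  destruct (Hcoord fst Rabs_fst_le_dist2) as [dx Hx].
  destruct (Hcoord snd Rabs_snd_le_dist2) as [dy Hy].
  exists (Rmin dx dy). split; [apply Rmin_pos; apply cond_pos|].
  intros s t Hs Ht Hst. eapply Rle_lt_trans; [apply dist2_le_Rabs_sum|].
  assert (Hx' := Hx s t Hs Ht (Rlt_le_trans _ _ _ Hst (Rmin_l _ _))).
  assert (Hy' := Hy s t Hs Ht (Rlt_le_trans _ _ _ Hst (Rmin_r _ _))).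
  lra.
Qed.

Lemma curve_dG_lower_bound g : curve_cont g 0 1 -> (forall t, 0 <= t <= 1 -> inG (g t)) ->
  exists m, 0 < m /\ forall t, 0 <= t <= 1 -> m <= dG (g t).
Proof.
  intros Hg HG.
  destruct (continuity_ab_min (fun s => dG (g (clamp01 s))) 0 1) as [t0 [Hmin Ht0]];
    [lra|intros; apply continuity_pt_lipschitz_curve; [exact Rabs_dG_sub_le|exact Hg]|].
  exists (dG (g t0)). split; [apply dG_pos, HG, Ht0|].
  intros t Ht. specialize (Hmin t Ht). cbv beta in Hmin.
  rewrite !clamp01_id in Hmin by assumption. exact Hmin.
Qed.

Definition unif_part (N i : nat) : R := INR i / INR N.

Lemma unif_part_S N i : (0 < N)%nat -> unif_part N (S i) = unif_part N i + / INR N.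
Proof.
  intros HN. assert (0 < INR N) by (apply lt_0_INR, HN).
  unfold unif_part. rewrite S_INR. field. lra.
Qed.

Lemma unif_part_in N i : (0 < N)%nat -> (i <= N)%nat -> 0 <= unif_part N i <= 1.
Proof.
  intros HN Hi. assert (0 < INR N) by (apply lt_0_INR, HN).
  assert (INR i <= INR N) by (apply le_INR, Hi). assert (0 <= INR i) by apply pos_INR.
  unfold unif_part. split.
  - apply Rdiv_le_0_compat; lra.
  - apply Rle_div_l; lra.
Qed.

Lemma unif_part_partition N : (0 < N)%nat -> partition (unif_part N) N 0 1.
Proof.
  intros HN. assert (0 < INR N) by (apply lt_0_INR, HN).
  unfold partition, unif_part. split; [|split].
  - cbn [INR]. unfold Rdiv. ring.
  - field. lra.
  - intros i _. rewrite S_INR. unfold Rdiv. apply Rmult_lt_compat_r; [apply Rinv_0_lt_compat|]; lra.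
Qed.

Lemma curve_fine_partition g rho : curve_cont g 0 1 ->
  (forall t, 0 <= t <= 1 -> inG (g t)) -> 0 < rho ->
  exists N, (0 < N)%nat /\ forall i, (i < N)%nat ->
    forall s, unif_part N i <= s <= unif_part N (S i) ->
      dist2 (g (unif_part N i)) (g s) <= rho * dG (g (unif_part N i)).
Proof.
  intros Hg HG Hr.
  destruct (curve_dG_lower_bound g Hg HG) as [m [Hm Hmin]].
  destruct (curve_unif_cont g Hg (rho * m) ltac:(nra)) as [delta [Hd Hu]].
  destruct (archimed_cor1 delta Hd) as [N [HN HN0]].
  exists N. split; [exact HN0|]. intros i Hi s Hs.
  assert (Hi0 := unif_part_in N i HN0 ltac:(lia)).
  assert (Hi1 := unif_part_in N (S i) HN0 Hi).
  rewrite unif_part_S in Hs, Hi1 by exact HN0.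
  assert (Hmi := Hmin _ Hi0).
  left. eapply Rlt_le_trans; [apply Hu; [exact Hi0|lra|]|nra].
  rewrite Rabs_left1 by lra. lra.
Qed.

Lemma wsum_ge_telescope (a : nat -> R) c g P n :
  (forall i, (i < n)%nat -> a i - a (S i) <= c i * dist2 (g (P (S i))) (g (P i))) ->
  a 0%nat - a n <= wsum c g P n.
Proof.
  induction n as [|n IH]; intros H; cbn [wsum]; [lra|].
  assert (IH' := IH (fun i Hi => H i ltac:(lia))). assert (Hn := H n ltac:(lia)). lra.
Qed.

Lemma qh_lipschitz_step f p q rho : qh_lipschitz f -> 0 < rho < 1 / 2 -> 0 < dG p ->
  dist2 p q <= rho * dG p ->
  (1 - 2 * rho) / (1 + rho) * (f p - f q) <= / ((1 + rho) * dG p) * dist2 q p.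
Proof.
  intros Hf Hr Hd Hpq.
  assert (HD := dist2_ge0 p q).
  assert (H := Hf p q ltac:(nra)).
  rewrite dist2_sym.
  apply Rle_trans with ((1 - 2 * rho) / (1 + rho) * (dist2 p q / ((1 - 2 * rho) * dG p))).
  - apply Rmult_le_compat_l; [apply Rdiv_le_0_compat; lra|].
    eapply Rle_trans; [apply Rle_abs|]. eapply Rle_trans; [exact H|].
    apply Rdiv_le_contravar_r; nra.
  - right. field. split; lra.
Qed.

Lemma qh_lipschitz_line_int f g x y M rho : qh_lipschitz f ->
  admissible_curve g x y -> line_int_le (fun p => / dG p) g M -> 0 < rho < 1 / 2 ->
  (1 - 2 * rho) / (1 + rho) * (f x - f y) <= M.
Proof.
  intros Hf [Hg [_ [Hg0 [Hg1 HG]]]] HL Hr.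
  destruct (curve_fine_partition g rho Hg HG ltac:(lra)) as [N [HN Hfine]].
  assert (Hpart := unif_part_partition N HN).
  set (P := unif_part N) in *. change (unif_part N) with P in Hfine, Hpart.
  set (c := fun i => / ((1 + rho) * dG (g (P i)))).
  assert (HPin : forall i, (i <= N)%nat -> 0 <= P i <= 1) by (intros; apply unif_part_in; auto).
  assert (Hc : forall i, (i < N)%nat -> forall s, P i <= s <= P (S i) -> c i <= / dG (g s)).
  { intros i Hi s Hs. unfold c.
    assert (Hi0 := HPin i ltac:(lia)). assert (Hi1 := HPin (S i) Hi).
    assert (0 < dG (g s)) by (apply dG_pos, HG; lra).
    assert (L := dG_lipschitz (g s) (g (P i))). rewrite dist2_sym in L.
    assert (Hf' := Hfine i Hi s Hs).
    apply Rinv_le_contravar; [assumption|nra]. }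
  assert (HW := HL P N c Hpart Hc).
  destruct Hpart as [E0 [E1 Hinc]].
  replace x with (g (P 0%nat)) by (rewrite E0; exact Hg0).
  replace y with (g (P N)) by (rewrite E1; exact Hg1).
  eapply Rle_trans; [|exact HW].
  rewrite Rmult_minus_distr_l.
  apply (wsum_ge_telescope (fun i => (1 - 2 * rho) / (1 + rho) * f (g (P i)))).
  intros i Hi. rewrite <- Rmult_minus_distr_l.
  apply qh_lipschitz_step; [exact Hf|exact Hr|apply dG_pos, HG, HPin; lia|].
  apply Hfine; [exact Hi|]. assert (Hinc' := Hinc i Hi). lra.
Qed.

Lemma le_of_shrink_factor C M :
  (forall rho, 0 < rho < 1 / 2 -> (1 - 2 * rho) / (1 + rho) * C <= M) -> C <= M.
Proof.
  intros H. destruct (Rle_or_lt C 0) as [HC|HC].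
  - assert (H1 := H (1 / 4) ltac:(lra)).
    replace ((1 - 2 * (1 / 4)) / (1 + 1 / 4)) with (2 / 5) in H1 by field. lra.
  - apply Rle_plus_epsilon. intros eps He.
    set (rho := eps / (3 * (C + eps))).
    assert (Hrho : 0 < rho < 1 / 3).
    { unfold rho. split; [apply Rdiv_lt_0_compat; lra|].
      apply Rlt_div_l; lra. }
    assert (H1 := H rho ltac:(lra)).
    assert (E : (1 - 2 * rho) / (1 + rho) = 1 - 3 * rho + 3 * rho ^ 2 / (1 + rho))
      by (field; lra).
    assert (0 <= 3 * rho ^ 2 / (1 + rho) * C)
      by (apply Rmult_le_pos; [apply Rdiv_le_0_compat; nra|lra]).
    assert (E' : 3 * rho * C = eps * (C / (C + eps))) by (unfold rho; field; lra).
    assert (C / (C + eps) <= 1) by (apply Rle_div_l; lra).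
    rewrite E in H1. nra.
Qed.

Lemma qh_lipschitz_kG_le f x y r : qh_lipschitz f -> kG_le x y r -> f x - f y <= r.
Proof.
  intros Hf Hk. apply Rle_plus_epsilon. intros eps He.
  destruct (Hk eps He) as [g [Hadm Hint]].
  apply le_of_shrink_factor. intros rho Hr.
  exact (qh_lipschitz_line_int f g x y (r + eps) rho Hf Hadm Hint Hr).
Qed.

(** * The test function psi *)

(* For [0 < snd p], the angle at [e1] from the positive real axis to [p]. *)
Definition ang_e1 (p : pt) : R := PI / 2 - atan ((fst p - 1) / snd p).

Lemma ang_e1_pos p : 0 < ang_e1 p.
Proof. unfold ang_e1. destruct (atan_bound ((fst p - 1) / snd p)). lra. Qed.

Lemma ang_e1_eq_atan p : 1 < fst p -> 0 < snd p -> ang_e1 p = atan (snd p / (fst p - 1)).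
Proof.
  intros Ha Hy. unfold ang_e1.
  rewrite <- atan_inv by (apply Rdiv_lt_0_compat; lra).
  f_equal. field. lra.
Qed.

Lemma ang_e1_le_div p k : 0 < snd p -> 0 < k -> k <= fst p - 1 -> ang_e1 p <= snd p / k.
Proof.
  intros Hy Hk Hka. rewrite ang_e1_eq_atan by lra.
  apply Rle_trans with (snd p / (fst p - 1)).
  - apply atan_le_id. apply Rlt_le, Rdiv_lt_0_compat; lra.
  - apply Rdiv_le_contravar_r; lra.
Qed.

Lemma ang_e1_le_arcsinh p : 0 < snd p -> 2 <= fst p -> ang_e1 p <= arcsinh (snd p).
Proof.
  intros Hy Ha. rewrite ang_e1_eq_atan by lra.
  apply Rle_trans with (atan (snd p)); [|apply atan_le_arcsinh; lra].
  assert (Hle : snd p / (fst p - 1) <= snd p).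
  { rewrite <- (Rdiv_1_r (snd p)) at 2. apply Rdiv_le_contravar_r; lra. }
  destruct (Rle_lt_or_eq_dec _ _ Hle) as [Hlt | ->]; [|lra].
  left. apply atan_increasing, Hlt.
Qed.

Lemma ang_e1_seg_lipschitz p q h : 0 < h ->
  (forall t, 0 <= t <= 1 -> 0 < snd (seg p q t) /\ h <= dist2 (seg p q t) e1) ->
  Rabs (ang_e1 q - ang_e1 p) <= dist2 p q / h.
Proof.
  intros Hh Hseg. destruct p as [a0 y0], q as [a1 y1].
  assert (H := Rabs_sub_le_of_derive_bound (fun t => ang_e1 (seg (a0, y0) (a1, y1) t))
    (fun t => ((a0 + t * (a1 - a0) - 1) * (y1 - y0) - (y0 + t * (y1 - y0)) * (a1 - a0)) /
              ((a0 + t * (a1 - a0) - 1)^2 + (y0 + t * (y1 - y0))^2))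
    (dist2 (a0, y0) (a1, y1) / h)).
  cbv beta in H. rewrite seg_0, seg_1 in H. apply H; clear H; intros t Ht;
    destruct (Hseg t Ht) as [Hy Hd]; unfold seg, dist2, e1 in Hy, Hd; cbn [fst snd] in Hy, Hd.
  - unfold ang_e1, seg; cbn [fst snd]. auto_derive; [lra|].
    assert (0 < (y0 + t * (y1 - y0))^2) by (apply pow_lt; lra).
    assert (0 <= (a0 + t * (a1 - a0) - 1)^2) by apply pow2_ge_0.
    field. repeat split; lra.
  - rewrite dist2_eq_norm2; cbn [fst snd]. apply Rabs_cross_div_le; [exact Hh|].
    rewrite Rminus_0_r in Hd. exact Hd.
Qed.

Lemma ang_me1_seg_lipschitz p q h : 0 < h ->
  (forall t, 0 <= t <= 1 -> 0 < snd (seg p q t) /\ h <= dist2 (seg p q t) me1) ->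
  Rabs (ang_e1 (mirror q) - ang_e1 (mirror p)) <= dist2 p q / h.
Proof.
  intros Hh Hseg. rewrite <- dist2_mirror.
  apply ang_e1_seg_lipschitz; [exact Hh|].
  intros t Ht. rewrite seg_mirror, dist2_mirror_e1. exact (Hseg t Ht).
Qed.

Lemma arcsinh_seg_lipschitz p q h : 0 < h ->
  (forall t, 0 <= t <= 1 -> h <= sqrt (snd (seg p q t) ^ 2 + 1)) ->
  Rabs (arcsinh (snd q) - arcsinh (snd p)) <= dist2 p q / h.
Proof.
  intros Hh Hseg.
  assert (H := Rabs_sub_le_of_derive_bound (fun t => arcsinh (snd (seg p q t)))
    (fun t => (snd q - snd p) * / sqrt (snd (seg p q t) ^ 2 + 1)) (dist2 p q / h)).
  cbv beta in H. rewrite seg_0, seg_1 in H. apply H; clear H; intros t Ht.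
  - apply (is_derive_comp arcsinh (fun t => snd (seg p q t))); [apply is_derive_arcsinh|].
    unfold seg; cbn [fst snd]. auto_derive; [auto|ring].
  - assert (Hd := Hseg t Ht). assert (H1 := one_le_sqrt_sq_add1 (snd (seg p q t))).
    rewrite Rabs_mult, Rabs_inv, (Rabs_right (sqrt _)) by lra.
    rewrite dist2_eq_norm2. unfold Rdiv.
    apply Rmult_le_compat; [apply Rabs_pos|apply Rlt_le, Rinv_0_lt_compat; lra| |].
    + apply Rabs_le_norm2_r.
    + apply Rinv_le_contravar; lra.
Qed.

Definition psi_up (p : pt) : R :=
  Rmin (Rmin (ang_e1 p) (ang_e1 (mirror p))) (arcsinh (snd p)).

Lemma psi_up_far p : 0 < snd p -> 2 <= Rabs (fst p) ->
  psi_up p = Rmin (ang_e1 p) (ang_e1 (mirror p)).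
Proof.
  intros Hy Ha. unfold psi_up. apply Rmin_left.
  unfold Rabs in Ha. destruct (Rcase_abs (fst p)).
  - eapply Rle_trans; [apply Rmin_r|].
    apply (ang_e1_le_arcsinh (mirror p)); unfold mirror; cbn [fst snd]; lra.
  - eapply Rle_trans; [apply Rmin_l|]. apply ang_e1_le_arcsinh; lra.
Qed.

Lemma psi_up_axis p : snd p = 0 -> psi_up p = 0.
Proof.
  intros Hy. unfold psi_up. rewrite Hy, arcsinh_0. apply Rmin_right.
  apply Rlt_le, Rmin_pos; apply ang_e1_pos.
Qed.

Lemma psi_up_nonneg p : 0 <= snd p -> 0 <= psi_up p.
Proof.
  intros Hy. unfold psi_up. apply Rmin_glb; [apply Rlt_le, Rmin_pos; apply ang_e1_pos|].
  rewrite <- arcsinh_0. apply arcsinh_le, Hy.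
Qed.

Lemma dG_le_sqrt_sq_add1 p : Rabs (fst p) <= 2 -> dG p <= sqrt (snd p ^ 2 + 1).
Proof.
  rewrite Rabs_le_between. intros Ha.
  destruct (Rle_dec 0 (fst p)).
  - eapply Rle_trans; [apply dG_le_dist2_e1|].
    unfold dist2, e1; cbn [fst snd]. apply sqrt_le_1_alt. nra.
  - eapply Rle_trans; [apply dG_le_dist2_me1|].
    unfold dist2, me1; cbn [fst snd]. apply sqrt_le_1_alt. nra.
Qed.

Lemma psi_up_seg_lipschitz p q h : 0 < h ->
  (forall t, 0 <= t <= 1 -> 0 < snd (seg p q t) /\ h <= dG (seg p q t)) ->
  (2 <= Rabs (fst p) /\ 2 <= Rabs (fst q) \/
   forall t, 0 <= t <= 1 -> h <= sqrt (snd (seg p q t) ^ 2 + 1)) ->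
  Rabs (psi_up p - psi_up q) <= dist2 p q / h.
Proof.
  intros Hh Hseg Hcase.
  assert (Hp : 0 < snd p) by (rewrite <- (seg_0 p q); apply Hseg; lra).
  assert (Hq : 0 < snd q) by (rewrite <- (seg_1 p q); apply Hseg; lra).
  assert (Hang : Rabs (ang_e1 p - ang_e1 q) <= dist2 p q / h).
  { rewrite Rabs_minus_sym. apply ang_e1_seg_lipschitz; [exact Hh|].
    intros t Ht. destruct (Hseg t Ht) as [Hy Hd].
    split; [exact Hy|]. eapply Rle_trans; [exact Hd|apply dG_le_dist2_e1]. }
  assert (Hang' : Rabs (ang_e1 (mirror p) - ang_e1 (mirror q)) <= dist2 p q / h).
  { rewrite Rabs_minus_sym. apply ang_me1_seg_lipschitz; [exact Hh|].
    intros t Ht. destruct (Hseg t Ht) as [Hy Hd].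
    split; [exact Hy|]. eapply Rle_trans; [exact Hd|apply dG_le_dist2_me1]. }
  destruct Hcase as [[Hfp Hfq] | Hband].
  - rewrite !psi_up_far by assumption. apply Rabs_Rmin_sub_le; assumption.
  - unfold psi_up. apply Rabs_Rmin_sub_le; [apply Rabs_Rmin_sub_le; assumption|].
    rewrite Rabs_minus_sym. apply arcsinh_seg_lipschitz; assumption.
Qed.

Lemma psi_up_lipschitz p q : 0 < snd p -> 0 < snd q -> 2 * dist2 p q < dG p ->
  Rabs (psi_up p - psi_up q) <= dist2 p q / (dG p - 2 * dist2 p q).
Proof.
  intros Hp Hq Hpq.
  assert (HD : 0 <= dist2 p q) by apply dist2_ge0.
  assert (Hseg : forall t, 0 <= t <= 1 -> dG p - dist2 p q <= dG (seg p q t))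
    by (intros t Ht; apply dG_seg_lower, Ht).
  apply psi_up_seg_lipschitz; [lra| |].
  { intros t Ht. split; [unfold seg; cbn [snd]; nra|]. specialize (Hseg t Ht). lra. }
  assert (Hstrip : forall w, Rabs (fst w) <= 2 -> dG p - dist2 p q <= dG w ->
            (forall t, 0 <= t <= 1 -> Rabs (snd w - snd (seg p q t)) <= dist2 p q) ->
            forall t, 0 <= t <= 1 -> dG p - 2 * dist2 p q <= sqrt (snd (seg p q t) ^ 2 + 1)).
  { intros w Hw Hdw Hsw t Ht.
    assert (L := sqrt_sq_add1_lipschitz (snd (seg p q t)) (snd w)).
    assert (M := dG_le_sqrt_sq_add1 w Hw). specialize (Hsw t Ht). lra. }
  destruct (Rle_dec 2 (Rabs (fst p))) as [Hfp|Hfp];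
    [destruct (Rle_dec 2 (Rabs (fst q))) as [Hfq|Hfq]|].
  - left; split; assumption.
  - right. apply (Hstrip q); [lra| |].
    + assert (H1 := Hseg 1 ltac:(lra)). rewrite seg_1 in H1. exact H1.
    + intros t Ht. eapply Rle_trans; [apply Rabs_snd_le_dist2|].
      rewrite dist2_sym, dist2_seg_r by lra. nra.
  - right. apply (Hstrip p); [lra|lra|].
    intros t Ht. eapply Rle_trans; [apply Rabs_snd_le_dist2|].
    rewrite dist2_seg_l by lra. nra.
Qed.

Lemma psi_up_le_near_axis p ar : 0 < snd p -> Rabs (fst p - ar) < dG (ar, 0) ->
  psi_up p <= snd p / (dG (ar, 0) - Rabs (fst p - ar)).
Proof.
  intros Hy Hk.
  assert (Hfst : - Rabs (fst p - ar) <= fst p - ar <= Rabs (fst p - ar))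
    by (apply Rabs_le_between, Rle_refl).
  destruct (Rle_dec (Rabs ar) 2) as [Hs|Hs].
  - assert (H1 : dG (ar, 0) <= 1).
    { assert (H := dG_le_sqrt_sq_add1 (ar, 0) Hs). cbn [fst snd] in H.
      replace (0 ^ 2 + 1) with 1 in H by ring. rewrite sqrt_1 in H. exact H. }
    unfold psi_up. eapply Rle_trans; [apply Rmin_r|].
    eapply Rle_trans; [apply arcsinh_le_id; lra|].
    rewrite <- (Rdiv_1_r (snd p)) at 1. apply Rdiv_le_contravar_r; lra.
  - unfold Rabs in Hs. destruct (Rcase_abs ar).
    + assert (H1 : dG (ar, 0) <= - ar - 1).
      { eapply Rle_trans; [apply dG_le_dist2_me1|]. eapply Rle_trans; [apply dist2_le_Rabs_sum|].
        unfold me1; cbn [fst snd]. rewrite Rminus_0_r, Rabs_R0, Rabs_left by lra. lra. }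
      unfold psi_up. eapply Rle_trans; [apply Rmin_l|]. eapply Rle_trans; [apply Rmin_r|].
      apply (ang_e1_le_div (mirror p)); unfold mirror; cbn [fst snd]; lra.
    + assert (H1 : dG (ar, 0) <= ar - 1).
      { eapply Rle_trans; [apply dG_le_dist2_e1|]. eapply Rle_trans; [apply dist2_le_Rabs_sum|].
        unfold e1; cbn [fst snd]. rewrite Rminus_0_r, Rabs_R0, Rabs_right by lra. lra. }
      unfold psi_up. eapply Rle_trans; [apply Rmin_l|]. eapply Rle_trans; [apply Rmin_l|].
      apply ang_e1_le_div; lra.
Qed.

Definition psi (p : pt) : R :=
  if Rle_dec 0 (snd p) then psi_up p else - psi_up (flip p).

Lemma psi_upper p : 0 <= snd p -> psi p = psi_up p.
Proof. intros Hy. unfold psi. destruct (Rle_dec 0 (snd p)); [reflexivity|contradiction]. Qed.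

Lemma psi_flip p : psi (flip p) = - psi p.
Proof.
  destruct p as [a y]. unfold psi, flip; cbn [fst snd].
  destruct (Rle_dec 0 (- y)), (Rle_dec 0 y).
  - rewrite !psi_up_axis by (cbn [snd]; lra). ring.
  - ring.
  - rewrite Ropp_involutive. reflexivity.
  - lra.
Qed.

Lemma Rabs_psi_le_near_axis p ar : dist2 p (ar, 0) < dG (ar, 0) ->
  Rabs (psi p) <= dist2 p (ar, 0) / (dG (ar, 0) - dist2 p (ar, 0)).
Proof.
  assert (Hup : forall p, 0 <= snd p -> dist2 p (ar, 0) < dG (ar, 0) ->
            Rabs (psi p) <= dist2 p (ar, 0) / (dG (ar, 0) - dist2 p (ar, 0))).
  { clear p. intros p Hy Hp.
    assert (HD : 0 <= dist2 p (ar, 0)) by apply dist2_ge0.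
    rewrite (psi_upper p Hy), Rabs_right by (apply Rle_ge, psi_up_nonneg, Hy).
    destruct Hy as [Hy | Hy].
    - assert (Hsnd := Rabs_snd_le_dist2 p (ar, 0)). assert (Hfst := Rabs_fst_le_dist2 p (ar, 0)).
      cbn [fst snd] in Hsnd, Hfst. rewrite Rminus_0_r, Rabs_right in Hsnd by lra.
      eapply Rle_trans; [apply (psi_up_le_near_axis p ar); lra|].
      unfold Rdiv. apply Rmult_le_compat; [lra|apply Rlt_le, Rinv_0_lt_compat; lra|lra|].
      apply Rinv_le_contravar; lra.
    - rewrite psi_up_axis by auto. apply Rmult_le_pos; [exact HD|].
      apply Rlt_le, Rinv_0_lt_compat. lra. }
  intros Hp. destruct (Rle_or_lt 0 (snd p)) as [Hy|Hy]; [apply Hup; assumption|].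
  replace (psi p) with (- psi (flip p)) by (rewrite psi_flip; ring).
  rewrite Rabs_Ropp, <- (dist2_flip_axis p ar).
  apply Hup; [unfold flip; cbn [snd]; lra|]. rewrite dist2_flip_axis. exact Hp.
Qed.

Lemma seg_crosses_axis p q : snd p <= 0 <= snd q \/ snd q <= 0 <= snd p ->
  exists t, 0 <= t <= 1 /\ snd (seg p q t) = 0.
Proof.
  intros Hs. destruct (Req_dec (snd p) (snd q)) as [E|NE].
  - exists 0. rewrite seg_0. lra.
  - exists (snd p / (snd p - snd q)).
    assert (Et : (snd p - snd q) * (snd p / (snd p - snd q)) = snd p) by (field; lra).
    split; [|unfold seg; cbn [snd]; field; lra].
    destruct Hs; assert (snd p < snd q \/ snd q < snd p) by lra; split; nra.
Qed.

Lemma psi_lipschitz_across_axis p q : snd p <= 0 <= snd q \/ snd q <= 0 <= snd p ->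
  2 * dist2 p q < dG p ->
  Rabs (psi p - psi q) <= dist2 p q / (dG p - 2 * dist2 p q).
Proof.
  intros Hs Hpq. destruct (seg_crosses_axis p q Hs) as [t [Ht Hr]].
  assert (Er : seg p q t = (fst (seg p q t), 0)) by (rewrite <- Hr; apply surjective_pairing).
  set (ar := fst (seg p q t)) in Er.
  assert (HD : 0 <= dist2 p q) by apply dist2_ge0.
  assert (D1 : dist2 p (ar, 0) = t * dist2 p q) by (rewrite <- Er; apply dist2_seg_l; lra).
  assert (D2 : dist2 q (ar, 0) = (1 - t) * dist2 p q)
    by (rewrite <- Er, dist2_sym; apply dist2_seg_r; lra).
  assert (Hr0 : dG p - t * dist2 p q <= dG (ar, 0))
    by (assert (L := dG_lipschitz p (ar, 0)); lra).
  assert (P1 := Rabs_psi_le_near_axis p ar ltac:(nra)).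
  assert (P2 := Rabs_psi_le_near_axis q ar ltac:(nra)).
  rewrite D1 in P1. rewrite D2 in P2.
  unfold Rminus at 1. eapply Rle_trans; [apply Rabs_triang|]. rewrite Rabs_Ropp.
  replace (dist2 p q / (dG p - 2 * dist2 p q))
    with (t * dist2 p q / (dG p - 2 * dist2 p q) + (1 - t) * dist2 p q / (dG p - 2 * dist2 p q))
    by (field; lra).
  apply Rplus_le_compat.
  - eapply Rle_trans; [exact P1|]. apply Rdiv_le_contravar_r; nra.
  - eapply Rle_trans; [exact P2|]. apply Rdiv_le_contravar_r; nra.
Qed.

Lemma psi_qh_lipschitz : qh_lipschitz psi.
Proof.
  intros p q Hpq.
  destruct (Rle_or_lt (snd p) 0) as [Hp|Hp], (Rle_or_lt (snd q) 0) as [Hq|Hq];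
    try (apply psi_lipschitz_across_axis; [lra|exact Hpq]).
  - destruct (Req_dec (snd p) 0), (Req_dec (snd q) 0);
      try (apply psi_lipschitz_across_axis; [lra|exact Hpq]).
    replace (psi p - psi q) with (- (psi (flip p) - psi (flip q))) by (rewrite !psi_flip; ring).
    rewrite Rabs_Ropp, <- (dist2_flip p q), <- (dG_flip p).
    rewrite !psi_upper by (unfold flip; cbn [snd]; lra).
    apply psi_up_lipschitz; [unfold flip; cbn [snd]; lra..|].
    rewrite dist2_flip, dG_flip. exact Hpq.
  - rewrite !psi_upper by lra. apply psi_up_lipschitz; assumption.
Qed.

(** * The points (0, beta) and (0, -beta) *)

Lemma ang_e1_imag_axis b : 0 < b -> ang_e1 (0, b) = PI - atan b.
Proof.
  intros Hb. unfold ang_e1; cbn [fst snd].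
  replace ((0 - 1) / b) with (- / b) by (field; lra).
  rewrite atan_opp, atan_inv by exact Hb. field.
Qed.

Lemma psi_imag_axis b : 0 < b -> arcsinh b + atan b = PI -> psi (0, b) = arcsinh b.
Proof.
  intros Hb Hbeta. rewrite psi_upper by (cbn [snd]; lra).
  unfold psi_up, mirror; cbn [fst snd]. rewrite Ropp_0, ang_e1_imag_axis by exact Hb.
  replace (PI - atan b) with (arcsinh b) by lra.
  rewrite !(Rmin_left (arcsinh b) (arcsinh b)) by lra. reflexivity.
Qed.

Lemma dG_imag_axis b : dG (0, b) = sqrt (1 + b ^ 2).
Proof.
  unfold dG, dist2, e1, me1; cbn [fst snd].
  replace ((0 - 1) ^ 2 + (b - 0) ^ 2) with (1 + b ^ 2) by ring.
  replace ((0 - -1) ^ 2 + (b - 0) ^ 2) with (1 + b ^ 2) by ring.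
  apply Rmin_left, Rle_refl.
Qed.

Lemma jG_imag_axis b : 0 < b -> jG (0, b) (0, - b) = ln (1 + 2 * b / sqrt (1 + b ^ 2)).
Proof.
  intros Hb. unfold jG. rewrite !dG_imag_axis.
  replace ((- b) ^ 2) with (b ^ 2) by ring. rewrite Rmin_left by lra.
  unfold dist2; cbn [fst snd].
  replace ((0 - 0) ^ 2 + (b - - b) ^ 2) with ((2 * b) ^ 2) by ring.
  rewrite sqrt_pow2 by lra. reflexivity.
Qed.

Theorem mainTheorem19 (beta : R) :
  0 < beta -> arcsinh beta + atan beta = PI ->
  forall A, unif_const_ok A ->
    2 * arcsinh beta / ln (1 + 2 * beta / sqrt (1 + beta ^ 2)) <= A.
Proof.
  intros Hb Hbeta A [_ HA].
  assert (Hin : forall y, y <> 0 -> inG (0, y))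
    by (intros y Hy; split; intros E; injection E; lra).
  assert (Hk := qh_lipschitz_kG_le psi (0, beta) (0, - beta) _ psi_qh_lipschitz
                  (HA _ _ (Hin beta ltac:(lra)) (Hin (- beta) ltac:(lra)))).
  replace (psi (0, - beta)) with (- psi (0, beta)) in Hk by (symmetry; apply (psi_flip (0, beta))).
  rewrite psi_imag_axis, jG_imag_axis in Hk by assumption.
  assert (Hj : 0 < ln (1 + 2 * beta / sqrt (1 + beta ^ 2))).
  { rewrite <- ln_1. apply ln_increasing; [lra|].
    assert (0 < sqrt (1 + beta ^ 2)) by (apply sqrt_lt_R0; nra).
    assert (0 < 2 * beta / sqrt (1 + beta ^ 2)) by (apply Rdiv_lt_0_compat; lra). lra. }
  apply Rle_div_l; lra.
Qed.
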